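(* Let $X=(\mathbb{R}/\mathbb{Z})^2$ with Lebesgue measure $\mu$, let $f\colon X\to X$ be $f(x,y)=(x+y,y)$, and let $\varphi\colon X\to\mathbb{C}$ be $\varphi(x,y)=e(x)$, where $e(z)=\exp(2\pi i z)$. Let $(a_p)$ be a sequence indexed by the primes, with $a_p$ an integer, $0\leq a_p<p$, such that for almost every $y\in[0,1]$ the set of primes $p$ with $|y-a_p/p|\leq 1/(2p)$ is infinite. For each prime $p$ and $n\in\mathbb{Z}$ let $t_p(n)=e(-na_p/p)$, and define $s_p\colon X\to\mathbb{C}$ by $$s_p(x,y)=\frac{1}{p}\sum_{0\leq n<p}t_p(n)\,\varphi(f^n(x,y)).$$ Then: (1) the sequence $(s_p)$ does not converge $\mu$-almost everywhere as $p\to+\infty$; (2) if $\mathsf{P}$ is an infinite set of primes such that $\sum_{p\in\mathsf{P}}\frac{\log p}{p}<+\infty$, then the sequence $(s_p)_{p\in\mathsf{P}}$ converges $\mu$-almost everywhere to $0$.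
   Context: Such sequences $(a_p)$ exist (the paper chooses one via its main theorem with $c=1/2$); the proposition is stated for any such sequence. *)

From HB Require Import structures.
From mathcomp Require Import all_boot all_order all_algebra.
From mathcomp Require Import all_classical all_reals all_analysis.
From mathcomp Require Import complex.
Set Implicit Arguments. Unset Strict Implicit. Unset Printing Implicit Defensive.
Import Order.TTheory GRing.Theory Num.Theory.
Local Open Scope classical_set_scope.
Local Open Scope ring_scope.

Section Defs.
Variable R : realType.

Definition ee (z : R) : R[i] := (cos (2 * pi * z) +i* sin (2 * pi * z))%C.

(* The torus (R/Z)^2 is represented by the fundamental domain [0,1)^2 in R*R;
   all functions below are 1-periodic lifts. *)
Definition f (z : R * R) : R * R := (z.1 + z.2, z.2).

Definition phi (z : R * R) : R[i] := ee z.1.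

Definition t (a : nat -> nat) (p : nat) (n : nat) : R[i] :=
  ee (- (n%:R * (a p)%:R / p%:R)).

Definition s (a : nat -> nat) (p : nat) (z : R * R) : R[i] :=
  ((p%:R^-1)%:C)%C * \sum_(0 <= n < p) t a p n * phi (iter n f z).

Definition torus : set (R * R) := `[0, 1[%classic `*` `[0, 1[%classic.

Definition cvg_along (P : set nat) (u : nat -> R[i]) (l : R[i]) : Prop :=
  forall eps : R, 0 < eps ->
    exists N : nat, forall p : nat, P p -> (N <= p)%N -> ComplexField.Normc.normc (u p - l) < eps.

Definition converges_along (P : set nat) (u : nat -> R[i]) : Prop :=
  exists l : R[i], cvg_along P u l.

Definition primes_set : set nat := [set p | prime p].

End Defs.

Definition mu2 (R : realType) := ((@lebesgue_measure R) \x (@lebesgue_measure R))%E.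

From HB Require Import structures.
From mathcomp Require Import all_boot all_order all_algebra.
From mathcomp Require Import all_classical all_reals all_analysis.
From mathcomp Require Import complex.
From mathcomp Require Import ring lra measurable_realfun.
Import Order.TTheory GRing.Theory Num.Theory.
Import numFieldNormedType.Exports.
Local Open Scope classical_set_scope.
Local Open Scope ring_scope.

(* With [th = y - a_p / p], [s_p (x, y) = e(x) / p * sum_(n < p) e(th) ^ n] is a
   normalised geometric sum: its modulus is at least [1/8] when [|th| <= 1/(2p)],
   and at most [2 / (p r)] when [th] is at distance at least [r] from the
   integers.  If [sum_(p in P) 1/p] is finite (which follows from the hypothesis
   of (2) since [log p >= log 2]), Borel-Cantelli shows that for every [m] almost
   every [y] is eventually at distance at least [4 (m + 1) / p] from [a_p / p]
   modulo [1], hence [s_p -> 0] along [P] almost everywhere.  For (1), apply this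
   to a sparse set of primes ([p_k >= 2 ^ (k + 1)]): an almost-everywhere limit
   along all primes would then vanish, whereas the hypothesis on [(a_p)] makes
   [|s_p| >= 1/8] for infinitely many primes [p], almost everywhere. *)

Section TrigBounds.
Context {R : realType}.
Implicit Types v : R.

Lemma ge0_derive_le_from0 (g dg : R -> R) :
  (forall x : R, is_derive x 1 g (dg x)) -> (forall x, 0 < x -> 0 <= dg x) ->
  forall v, 0 <= v -> g 0 <= g v.
Proof.
move=> g_dg dg_ge0 v v_ge0.
apply: (@ger0_derive1_ndecry R g 0) => //.
- move=> x; rewrite in_itv /= andbT => x_gt0.
  by rewrite derive1E (@derive_val _ _ _ _ _ _ _ (g_dg x)); apply: dg_ge0.
- apply: continuous_subspaceT => x.
  exact/differentiable_continuous/derivable1_diffP/(@ex_derive _ _ _ _ _ _ _ (g_dg x)).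
Qed.

Lemma sin_le_id v : 0 <= v -> sin v <= v.
Proof.
move=> v_ge0.
have := @ge0_derive_le_from0 (fun x => x - sin x) (fun x => 1 - cos x) _ _ v v_ge0.
by rewrite sin0 subr0 subr_ge0; apply.
Qed.

Lemma cos_ge_taylor2 v : 1 - v ^+ 2 / 2 <= cos v.
Proof.
wlog v_ge0 : v / 0 <= v.
  move=> gen; have [/gen//|v_lt0] := leP 0 v.
  by rewrite -cosN -sqrrN gen // oppr_ge0 ltW.
have := @ge0_derive_le_from0 (fun x => cos x - (1 - x ^+ 2 / 2))
  (fun x => x - sin x) _ _ v v_ge0.
rewrite cos0 expr0n /= mul0r subr0 subrr subr_ge0; apply.
- move=> x; apply: is_derive_eq.
  by rewrite !scaler0 /GRing.scale /=; lra.
- by move=> x x_gt0; rewrite subr_ge0 sin_le_id // ltW.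
Qed.

Lemma sin_ge_taylor3 v : 0 <= v -> v - v ^+ 3 / 6 <= sin v.
Proof.
move=> v_ge0.
have := @ge0_derive_le_from0 (fun x => sin x - (x - x ^+ 3 / 6))
  (fun x => cos x - (1 - x ^+ 2 / 2)) _ _ v v_ge0.
rewrite sin0 expr0n /= mul0r subr0 subrr subr_ge0; apply.
- by move=> x; apply: is_derive_eq; rewrite /GRing.scale /=; field.
- by move=> x _; rewrite subr_ge0 cos_ge_taylor2.
Qed.

Lemma sin_ge_third v : 0 <= v <= 2 -> v / 3 <= sin v.
Proof.
move=> /andP[v_ge0 v_le2]; apply: (le_trans _ (sin_ge_taylor3 _ v_ge0)).
rewrite (_ : v ^+ 3 = v * (v * v)); last by rewrite !exprS expr0 mulr1.
nra.
Qed.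

(* [1 - cos t = 2 sin (t/2) ^+ 2] and [sin (t/2) >= t/6] on [0, pi]. *)
Lemma one_sub_cos_ge (t : R) : `|t| <= pi -> t ^+ 2 / 18 <= 1 - cos t.
Proof.
wlog t_ge0 : t / 0 <= t.
  move=> gen; have [/gen//|t_lt0] := leP 0 t.
  by rewrite -cosN -sqrrN -normrN; apply: gen; rewrite oppr_ge0 ltW.
rewrite ger0_norm // => t_le_pi.
have -> : t = (t / 2) *+ 2 by rewrite -mulr_natr mulfVK ?pnatr_eq0.
rewrite cos_mulr2n cos2sin2.
set v := t / 2.
have v_ge0 : 0 <= v by rewrite divr_ge0.
have v_le2 : v <= 2 by apply/ltW/(le_lt_trans _ (pihalf_lt2 R)); rewrite ler_pM2r.
have sin_ge : v / 3 <= sin v by apply: sin_ge_third; rewrite v_ge0.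
have : (v / 3) ^+ 2 <= sin v ^+ 2.
  by rewrite lerXn2r // nnegrE ?divr_ge0 // (le_trans _ sin_ge) ?divr_ge0.
rewrite -mulr_natr; lra.
Qed.

End TrigBounds.

Section UnitCircle.
Context {R : realType}.
Notation normc := (@ComplexField.Normc.normc R).
Implicit Types (u v th : R) (w : R[i]).

Lemma eeD u v : ee (u + v) = ee u * ee v.
Proof.
by rewrite /ee mulrDr cosD sinD /=; simpc; congr (_ +i* _)%C; rewrite addrC.
Qed.

Lemma ee0 : ee (0 : R) = 1.
Proof. by rewrite /ee mulr0 cos0 sin0. Qed.

Lemma ee_natmul (n : nat) u : ee (n%:R * u) = ee u ^+ n.
Proof.
elim: n => [|n IHn]; first by rewrite mul0r ee0 expr0.
by rewrite -addn1 natrD mulrDl mul1r eeD IHn exprD expr1.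
Qed.

Lemma ee1 : ee (1 : R) = 1.
Proof.
have two_pi : 2 * pi = pi *+ 2 :> R by rewrite mulr_natl.
by rewrite /ee mulr1 two_pi cos2pi sin2pi.
Qed.

Lemma eeD1 u : ee (u + 1) = ee u.
Proof. by rewrite eeD ee1 mulr1. Qed.

Lemma eeB1 u : ee (u - 1) = ee u.
Proof. by rewrite -[in RHS](subrK 1 u) eeD1. Qed.

Lemma normc_ge0 w : 0 <= normc w.
Proof. by case: w => ? ?; rewrite sqrtr_ge0. Qed.

Lemma normc_real (x : R) : normc x%:C%C = `|x|.
Proof. by rewrite /= expr0n /= addr0 sqrtr_sqr. Qed.

Lemma normc_ee u : normc (ee u) = 1.
Proof. by rewrite /= cos2Dsin2 sqrtr1. Qed.

Lemma normc_ee_sub1_sqr u : normc (ee u - 1) ^+ 2 = 2 * (1 - cos (2 * pi * u)).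
Proof.
rewrite /= sqr_sqrtr ?addr_ge0 ?sqr_ge0 // subr0.
have := cos2Dsin2 (2 * pi * u); lra.
Qed.

Lemma normc_ee_sub1_ge u : `|u| <= 2^-1 -> `|u| <= normc (ee u - 1).
Proof.
move=> u_le_half.
have pi_ge2 := pi_ge2 R.
have arg_le_pi : `|2 * pi * u| <= pi.
  rewrite normrM ger0_norm ?mulr_ge0 ?pi_ge0 //; nra.
have := one_sub_cos_ge _ arg_le_pi; rewrite !exprMn => cos_bound.
rewrite -(@ler_pXn2r _ 2) ?nnegrE ?normc_ge0 // normc_ee_sub1_sqr.
rewrite real_normK ?num_real //.
have : 4 <= pi ^+ 2 :> R by nra.
have := sqr_ge0 u; nra.
Qed.

Lemma normc_ee_sub1_le u : normc (ee u - 1) <= 2 * pi * `|u|.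
Proof.
rewrite -(@ler_pXn2r _ 2) ?nnegrE ?normc_ge0 ?mulr_ge0 ?pi_ge0 //.
rewrite normc_ee_sub1_sqr !exprMn real_normK ?num_real //.
have := cos_ge_taylor2 (2 * pi * u); rewrite !exprMn; lra.
Qed.

Lemma normc_sub1_le2 w : normc w = 1 -> normc (w - 1) <= 2.
Proof.
move=> w_unit; apply: le_trans (le_normcD _ _) _.
by rewrite normcN ComplexField.Normc.normc1 w_unit; lra.
Qed.

Lemma ee_sub1_geom th (p : nat) :
  (ee th - 1) * (\sum_(0 <= n < p) ee th ^+ n) = ee (p%:R * th) - 1.
Proof. by rewrite ee_natmul subrX1 big_mkord. Qed.

(* [ee d = ee th] says that [d] represents [th] modulo [1]. *)
Lemma normc_geom_ee_le th d r (p : nat) : 0 < r -> r <= `|d| <= 2^-1 ->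
  ee d = ee th -> normc (\sum_(0 <= n < p) ee th ^+ n) <= 2 / r.
Proof.
move=> r_gt0 /andP[r_le_d d_le_half] ee_dth.
have := normc_ge0 (\sum_(0 <= n < p) ee th ^+ n).
have : normc (ee th - 1) * normc (\sum_(0 <= n < p) ee th ^+ n) <= 2.
  by rewrite -ComplexField.Normc.normcM ee_sub1_geom normc_sub1_le2 ?normc_ee.
have : r <= normc (ee th - 1) by rewrite -ee_dth (le_trans r_le_d) ?normc_ee_sub1_ge.
rewrite ler_pdivlMr //; nra.
Qed.

(* For [|th| <= 1/(2p)] the bounds [p |th| <= |ee (p th) - 1|] and
   [|ee th - 1| <= 2 pi |th| < 8 |th|] give the lower bound. *)
Lemma normc_geom_ee_ge th (p : nat) : (0 < p)%N -> `|th| <= (2 * p%:R)^-1 ->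
  p%:R / 8 <= normc (\sum_(0 <= n < p) ee th ^+ n).
Proof.
move=> p_gt0 th_small.
have p_gt0' : 0 < p%:R :> R by rewrite ltr0n.
have [->|th_neq0] := eqVneq th 0.
  rewrite ee0 (eq_bigr (fun=> 1)) => [|n _]; last by rewrite expr1n.
  rewrite sumr_const_nat subn0 -[(1 : R[i]) *+ p](rmorph_nat (real_complex R)).
  rewrite normc_real ger0_norm ?ler0n //; lra.
have th_gt0 : 0 < `|th| by rewrite normr_gt0.
have pth_le_half : `|p%:R * th| <= 2^-1.
  rewrite normrM ger0_norm ?ler0n //.
  apply: (le_trans (ler_wpM2l (ltW p_gt0') th_small)).
  by rewrite invfM mulrCA mulfV ?gt_eqF // mulr1.
have := normc_ee_sub1_ge _ pth_le_half.
rewrite -ee_sub1_geom ComplexField.Normc.normcM normrM ger0_norm ?ler0n //.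
have := normc_ee_sub1_le th.
have := normc_ge0 (\sum_(0 <= n < p) ee th ^+ n).
have : pi < 4 :> R by have := pihalf_lt2 R; lra.
set S := normc _; set W := normc _ => pi_lt4 S_ge0 W_le pW_le.
have W_le8 : W <= 8 * `|th| by nra.
rewrite -(ler_pM2r th_gt0); nra.
Qed.

End UnitCircle.

Section Averages.
Context {R : realType}.
Notation normc := (@ComplexField.Normc.normc R).
Variable a : nat -> nat.

Lemma iter_f (n : nat) (z : R * R) : iter n (@f R) z = (z.1 + n%:R * z.2, z.2).
Proof.
elim: n => [|n IHn]; first by rewrite /= mul0r addr0; case: z.
by rewrite iterS IHn /f /= -addn1 natrD mulrDl mul1r addrA.
Qed.

Lemma s_geom (p : nat) (z : R * R) :
  s a p z = (p%:R^-1)%:C%C * ee z.1 *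
    \sum_(0 <= n < p) ee (z.2 - (a p)%:R / p%:R) ^+ n.
Proof.
rewrite /s -mulrA; congr (_ * _); rewrite mulr_sumr; apply: eq_bigr => n _.
by rewrite iter_f /phi /t /= -ee_natmul -!eeD; congr ee; ring.
Qed.

Lemma normc_s (p : nat) (z : R * R) :
  normc (s a p z) =
    p%:R^-1 * normc (\sum_(0 <= n < p) ee (z.2 - (a p)%:R / p%:R) ^+ n).
Proof.
rewrite s_geom !ComplexField.Normc.normcM normc_ee mulr1 normc_real.
by rewrite ger0_norm // invr_ge0 ler0n.
Qed.

(* Here [r] bounds from below the distance from [y] to [a p / p] modulo [1]. *)
Lemma normc_s_le (p : nat) (x y r : R) : (a p < p)%N -> 0 <= y < 1 -> 0 < r ->
  r <= `|y - (a p)%:R / p%:R| -> r <= `|y - ((a p)%:R / p%:R + 1)| ->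
  r <= `|y - ((a p)%:R / p%:R - 1)| ->
  normc (s a p (x, y)) <= p%:R^-1 * (2 / r).
Proof.
move=> ap_lt_p /andP[y_ge0 y_lt1] r_gt0 r_le r_le_D1 r_le_B1.
rewrite normc_s ler_wpM2l ?invr_ge0 ?ler0n //=.
set c := (a p)%:R / p%:R in r_le r_le_D1 r_le_B1 *.
have p_gt0 : 0 < p%:R :> R by rewrite ltr0n (leq_ltn_trans _ ap_lt_p).
have c_ge0 : 0 <= c by rewrite divr_ge0 ?ler0n.
have c_lt1 : c < 1 by rewrite ltr_pdivrMr // mul1r ltr_nat.
have geom_le d : r <= `|d| -> `|d| <= 2^-1 -> ee d = ee (y - c) ->
    normc (\sum_(0 <= n < p) ee (y - c) ^+ n) <= 2 / r.
  by move=> r_le_d d_le ee_d; apply: normc_geom_ee_le r_gt0 _ ee_d; rewrite r_le_d.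
have [th_gt_half|th_le_half] := ltP (2^-1) (y - c).
  apply: geom_le r_le_D1 _ _; last by rewrite opprD addrA eeB1.
  by rewrite ler_norml; apply/andP; split; lra.
have [th_lt_Nhalf|th_ge_Nhalf] := ltP (y - c) (- 2^-1).
  apply: geom_le r_le_B1 _ _; last by rewrite opprB addrCA addrC eeD1.
  by rewrite ler_norml; apply/andP; split; lra.
by apply: geom_le r_le _ _; rewrite // ler_norml; apply/andP; split; lra.
Qed.

Lemma normc_s_ge (p : nat) (x y : R) : (0 < p)%N ->
  `|y - (a p)%:R / p%:R| <= (2 * p%:R)^-1 -> 8^-1 <= normc (s a p (x, y)).
Proof.
move=> p_gt0 y_close; rewrite normc_s /=.
have := normc_geom_ee_ge _ _ p_gt0 y_close.
have p_gt0' : 0 < p%:R :> R by rewrite ltr0n.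
rewrite -(@ler_pM2l _ p%:R^-1) ?invr_gt0 // => /(le_trans _); apply.
by rewrite mulKf ?gt_eqF.
Qed.

End Averages.

#[local] Instance ae_mu2_filter (R : realType) : Filter (almost_everywhere (@mu2 R)) :=
  ae_filter_ringOfSetsType ((@lebesgue_measure R) \x (@lebesgue_measure R))%E.

Lemma ae_snd {R : realType} (Q : R -> Prop) :
  {ae @lebesgue_measure R, forall y, Q y} -> {ae @mu2 R, forall z, Q z.2}.
Proof.
move=> [N [mN N0 notQ_N]]; exists (setT `*` N); split.
- exact: measurableX.
- by rewrite /mu2 product_measure1E //; move: N0 => /= ->; rewrite mule0.
- by move=> [x y] /= notQ; split => //; apply: notQ_N.
Qed.

Section BorelCantelli.
Context {R : realType}.
Notation leb := (@lebesgue_measure R).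
Notation normc := (@ComplexField.Normc.normc R).
Context {a : nat -> nat} {P : set nat}.
Hypothesis ha : forall p, prime p -> (a p < p)%N.
Hypothesis P_prime : P `<=` primes_set.
Hypothesis P_summable : (\sum_(p <oo | p \in P) ((p%:R : R)^-1)%:E < +oo)%E.

(* The radius makes the bound [2 / (p r)] of [normc_s_le] equal to [1 / (2 (m + 1))]. *)
Let radius (m p : nat) : R := 4 * m.+1%:R / p%:R.

Definition close_to_ap (m p : nat) : set R :=
  if p \in P then
    let c : R := (a p)%:R / p%:R in
    ball c (radius m p) `|` ball (c + 1) (radius m p) `|` ball (c - 1) (radius m p)
  else set0.

Lemma measurable_close_to_ap m p : measurable (close_to_ap m p).
Proof.
rewrite /close_to_ap; case: ifP => _ //.
by apply: measurableU; [apply: measurableU|]; apply: measurable_ball.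
Qed.

Lemma close_to_ap_measure_le m p :
  (leb (close_to_ap m p) <= (24 * m.+1%:R / p%:R)%:E)%E.
Proof.
rewrite /close_to_ap; case: ifP => _; last by rewrite measure0 lee_fin divr_ge0 ?mulr_ge0.
have ball_measure c : (leb (ball c (radius m p)) <= (radius m p *+ 2)%:E)%E.
  by rewrite lebesgue_measure_ball // divr_ge0 ?mulr_ge0 ?ler0n.
apply: le_trans (measureU2 _ _ _) _; [apply: measurableU|..]; try exact: measurable_ball.
apply: le_trans (leeD (measureU2 _ _ _) (lexx _)) _; try exact: measurable_ball.
apply: le_trans (leeD (leeD (ball_measure _) (ball_measure _)) (ball_measure _)) _.
by rewrite -!EFinD lee_fin /radius; lra.
Qed.

Lemma limsup_close_to_ap_negligible m : leb.-negligible (lim_sup_set (close_to_ap m)).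
Proof.
have measurable_limsup : measurable (lim_sup_set (close_to_ap m)).
  apply: bigcapT_measurable => n; apply: bigcup_measurable => k _.
  exact: measurable_close_to_ap.
apply/negligibleP => //; apply: lim_sup_set_cvg0; first exact: measurable_close_to_ap.
have -> : (\sum_(p <oo) leb (close_to_ap m p) =
           \sum_(p <oo | p \in P) leb (close_to_ap m p))%E.
  rewrite [RHS]eseries_mkcond; apply: eq_eseriesr => p _.
  by rewrite /close_to_ap; case: ifP => // _; rewrite measure0.
apply: (@le_lt_trans _ _
  (\sum_(p <oo | p \in P) ((24 * m.+1%:R)%:E * ((p%:R : R)^-1)%:E))%E).
  apply: lee_nneseries => [p _ _|p _]; first exact: measure_ge0.
  by rewrite -EFinM; apply: close_to_ap_measure_le.
rewrite nneseriesZl => [|p _]; last by rewrite lee_fin invr_ge0 ler0n.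
by apply: lte_mul_pinfty => //; rewrite lee_fin mulr_ge0 ?ler0n.
Qed.

Lemma normc_s_le_off_close m p (x y : R) : p \in P -> 0 <= y < 1 ->
  ~ close_to_ap m p y -> normc (s a p (x, y)) <= (2 * m.+1%:R)^-1.
Proof.
move=> pP y01; rewrite /close_to_ap pP /= => not_close.
have far c : ~ ball c (radius m p) y -> radius m p <= `|y - c|.
  by rewrite -ball_normE /= distrC leNgt => /negP.
have p_prime : prime p := P_prime _ (set_mem pP).
have p_gt0 := prime_gt0 p_prime.
have radius_gt0 : 0 < radius m p by rewrite /radius divr_gt0 ?mulr_gt0 ?ltr0n.
have -> : (2 * m.+1%:R)^-1 = p%:R^-1 * (2 / radius m p).
  by rewrite /radius; field; rewrite !gt_eqF ?ltr0n.
apply: normc_s_le (ha _ p_prime) y01 radius_gt0 _ _ _;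
  apply: far => close; apply: not_close.
- by left; left.
- by left; right.
- by right.
Qed.

Lemma cvg_along_s0_off_limsup (x y : R) : 0 <= y < 1 ->
  ~ (\bigcup_m lim_sup_set (close_to_ap m)) y ->
  cvg_along P (fun p => s a p (x, y)) 0.
Proof.
move=> y01 not_limsup eps eps_gt0.
pose m := Num.bound eps^-1.
have eps_inv_lt : eps^-1 < m.+1%:R.
  by apply: lt_trans (archi_boundP _) _; rewrite ?invr_ge0 ?ltW ?ltr_nat.
have [n not_close] : exists n, forall p, (n <= p)%N -> ~ close_to_ap m p y.
  apply: contrapT => frequently_close; apply: not_limsup; exists m => // k _.
  apply: contrapT => not_close; apply: frequently_close; exists k => p kp close.
  by apply: not_close; exists p.
exists n => p pP np; rewrite subr0.
apply: le_lt_trans (normc_s_le_off_close _ _ x _ (mem_set pP) y01 (not_close p np)) _.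
rewrite -(ltf_pV2 _ _) ?posrE ?invr_gt0 ?mulr_gt0 ?ltr0n // invrK.
by apply: lt_le_trans eps_inv_lt _; rewrite ler_peMl ?ler0n ?ler1n.
Qed.

Lemma ae_cvg_along_s0 :
  {ae @mu2 R, forall z, z \in @torus R -> cvg_along P (fun p => s a p z) 0}.
Proof.
have limsup_negligible : leb.-negligible (\bigcup_m lim_sup_set (close_to_ap m)).
  exact/negligible_bigcup/limsup_close_to_ap_negligible.
have : {ae leb, forall y, ~ (\bigcup_m lim_sup_set (close_to_ap m)) y}.
  by apply: negligibleS limsup_negligible => y /= /contrapT.
move/ae_snd; apply: filterS => -[x y] /= not_limsup.
rewrite inE => -[_ /=]; rewrite in_itv /= => y01.
exact: cvg_along_s0_off_limsup.
Qed.

End BorelCantelli.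

Lemma infinite_set_nat_ge (A : set nat) :
  infinite_set A -> forall N, exists2 p, A p & (N <= p)%N.
Proof.
move=> A_inf N.
have [p [Ap p_notin]] := infinite_setN0 (infinite_setD A_inf (finite_II N)).
by exists p => //; rewrite leqNgt; apply/negP.
Qed.

Fixpoint sparse_prime (k : nat) : nat :=
  if k is k'.+1 then s2val (prime_above (2 * sparse_prime k')) else 2.

Lemma sparse_prime_prime k : prime (sparse_prime k).
Proof. by case: k => [|k] //=; case: prime_above. Qed.

Lemma sparse_primeS_gt k : (2 * sparse_prime k < sparse_prime k.+1)%N.
Proof. by rewrite /=; case: prime_above. Qed.

Lemma sparse_prime_ge k : (2 ^ k.+1 <= sparse_prime k)%N.
Proof.
elim: k => [|k IHk] //; apply: ltnW; apply: leq_ltn_trans (sparse_primeS_gt k).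
by rewrite expnS leq_mul2l IHk orbT.
Qed.

Lemma sparse_prime_inj : injective sparse_prime.
Proof.
have sparse_prime_mono : {homo sparse_prime : i j / (i < j)%N}.
  apply: homo_ltn => [|k]; first exact: ltn_trans.
  by apply: leq_ltn_trans (sparse_primeS_gt k); rewrite leq_pmull.
move=> i j eq_ij; apply/eqP; apply: contraT; rewrite neq_ltn.
by case/orP => /sparse_prime_mono; rewrite eq_ij ltnn.
Qed.

Definition sparse_primes : set nat := range sparse_prime.

Lemma sparse_primes_prime : sparse_primes `<=` primes_set.
Proof. by move=> _ [k _ <-]; apply: sparse_prime_prime. Qed.

Lemma infinite_sparse_primes : infinite_set sparse_primes.
Proof.
move=> fin; apply: infinite_nat.
have := @inj_card_eq _ _ setT sparse_prime (fun x y _ _ => @sparse_prime_inj x y).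
by rewrite card_eq_le => /andP[_ /card_le_finite]; apply.
Qed.

Lemma sparse_primes_summable {R : realType} :
  (\sum_(p <oo | p \in sparse_primes) ((p%:R : R)^-1)%:E < +oo)%E.
Proof.
have inv_ge0 n : (0 <= ((n%:R : R)^-1)%:E)%E by rewrite lee_fin invr_ge0 ler0n.
rewrite nneseries_esum // set_mem_set esum_set_image //; last first.
  by move=> x y _ _; apply: sparse_prime_inj.
rewrite (eq_eseriesl (Q := xpredT)); last by move=> k; rewrite in_setT.
have geom := @cvg_geometric_eseries_half R 1 0.
rewrite expr0 divr1 in geom.
apply: (@le_lt_trans _ _ (\sum_(k <oo) ((1 / (2 ^ (k + 1))%N%:R)%:E : \bar R))%E).
  apply: lee_nneseries => [k _ _|k _]; first by rewrite lee_fin invr_ge0 ler0n.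
  rewrite lee_fin div1r lef_pV2 ?posrE ?ltr0n ?expn_gt0 ?prime_gt0 ?sparse_prime_prime //.
  by rewrite ler_nat addn1 sparse_prime_ge.
by rewrite (cvg_lim _ geom) // ltry.
Qed.

Lemma summable_inv_of_summable_ln_div {R : realType} (P : set nat) :
  (forall p, P p -> (2 <= p)%N) ->
  (\sum_(p <oo | p \in P) (ln (p%:R : R) / p%:R)%:E < +oo)%E ->
  (\sum_(p <oo | p \in P) ((p%:R : R)^-1)%:E < +oo)%E.
Proof.
move=> P_ge2 summable.
have ln2_gt0 : 0 < ln (2 : R) by apply: ln_gt0; lra.
apply: (@le_lt_trans _ _
  (\sum_(p <oo | p \in P) ((ln (2 : R))^-1)%:E * (ln (p%:R : R) / p%:R)%:E)%E).
  apply: lee_nneseries => [p _ _|p /set_mem/P_ge2 p_ge2].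
    by rewrite lee_fin invr_ge0 ler0n.
  have p_gt0 : 0 < p%:R :> R by rewrite ltr0n (leq_trans _ p_ge2).
  have ln_ge : ln (2 : R) <= ln p%:R by rewrite ler_ln ?posrE // ler_nat.
  rewrite -EFinM lee_fin.
  have -> : (ln 2)^-1 * (ln p%:R / p%:R) = p%:R^-1 * (ln p%:R / ln 2) :> R.
    by field; rewrite !gt_eqF.
  rewrite -[X in X <= _]mulr1 ler_wpM2l ?invr_ge0 ?ler0n //.
  by rewrite ler_pdivlMr // mul1r.
rewrite nneseriesZl => [|p /set_mem/P_ge2 p_ge2].
  by apply: lte_mul_pinfty => //; rewrite lee_fin invr_ge0 ltW.
by rewrite lee_fin divr_ge0 ?ler0n // ln_ge0 // ler1n (leq_trans _ p_ge2).
Qed.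

Section Divergence.
Context {R : realType}.
Notation normc := (@ComplexField.Normc.normc R).

Lemma not_converges_along_of_large (Q P : set nat) (u : nat -> R[i]) (c : R) :
  0 < c -> P `<=` Q -> infinite_set P -> cvg_along P u 0 ->
  infinite_set [set p | Q p /\ c <= normc (u p)] -> ~ converges_along Q u.
Proof.
move=> c_gt0 PQ P_inf u_to0 large_inf [l u_to_l].
have norm_le w v : normc w <= normc (w - v) + normc v.
  by rewrite -{1}(subrK v w) le_normcD.
have [|N1 near_l] := u_to_l (c / 4); first by rewrite divr_gt0.
have [|N2 near0] := u_to0 (c / 4); first by rewrite divr_gt0.
have [p Pp p_ge] := infinite_set_nat_ge _ P_inf (maxn N1 N2).
have [q [Qq q_large] q_ge] := infinite_set_nat_ge _ large_inf N1.
have := near_l p (PQ _ Pp) (leq_trans (leq_maxl _ _) p_ge).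
have := near0 p Pp (leq_trans (leq_maxr _ _) p_ge); rewrite subr0.
have := near_l q Qq q_ge.
have := norm_le (u q) l; have := norm_le l (u p).
rewrite -[normc (l - u p)]normcN opprB; lra.
Qed.

Lemma mu2_torus : @mu2 R (@torus R) = 1%E.
Proof.
have unit_itv : @lebesgue_measure R `[0%R, 1%R[%classic = 1%E.
  by rewrite lebesgue_measure_itv /= lte_fin ltr01 -EFinB subr0.
rewrite /mu2 /torus product_measure1E //.
by rewrite [X in (X * _)%E]unit_itv [X in (_ * X)%E]unit_itv mule1.
Qed.

Lemma not_ae_converges_along_primes (a : nat -> nat) :
  (forall p, prime p -> (a p < p)%N) ->
  {ae @lebesgue_measure R, forall y : R, y \in `[0, 1] ->
     infinite_set [set p : nat | prime p /\
       `|y - (a p)%:R / p%:R| <= (2 * p%:R)^-1]} ->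
  ~ {ae @mu2 R, forall z : R * R, z \in @torus R ->
       converges_along primes_set (fun p => s a p z)}.
Proof.
move=> ha dirichlet ae_converges.
have [N [mN N0 torusN]] : {ae @mu2 R, forall z : R * R, ~ (z \in @torus R)}.
  have ae_to0 := ae_cvg_along_s0 ha sparse_primes_prime
    (sparse_primes_summable (R := R)).
  move: ae_converges ae_to0 (ae_snd _ dirichlet).
  apply: filterS3 => -[x y] converges to0 close z_torus.
  have /andP[y_ge0 y_lt1] : 0 <= y < 1.
    by move: z_torus; rewrite inE => -[_]; rewrite /= in_itv.
  have large : infinite_set [set p | primes_set p /\ 8^-1 <= normc (s a p (x, y))].
    apply: sub_infinite_set (close _) => [p /= [p_prime y_close]|].
      by split=> //; apply: normc_s_ge; rewrite ?prime_gt0.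
    by rewrite in_itv /= y_ge0 (ltW y_lt1).
  have c_gt0 : 0 < 8^-1 :> R by rewrite invr_gt0.
  exact: (not_converges_along_of_large _ _ _ _ c_gt0 sparse_primes_prime
    infinite_sparse_primes (to0 z_torus) large (converges z_torus)).
have : (@mu2 R (@torus R) <= @mu2 R N)%E.
  apply: le_measure; rewrite ?inE //; first by apply: measurableX; exact: measurable_itv.
  by move=> z z_torus; apply: torusN => /(_ (mem_set z_torus)).
by rewrite mu2_torus N0 lee_fin ler10.
Qed.

End Divergence.

Theorem proposition4p1 (R : realType) (a : nat -> nat)
  (ha : forall p : nat, prime p -> (a p < p)%N)
  (hdir : {ae (@lebesgue_measure R), forall y : R, y \in `[0, 1] ->
            infinite_set [set p : nat | prime p /\
               `|y - (a p)%:R / p%:R| <= (2 * p%:R)^-1]}) :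
  (~ {ae @mu2 R, forall z : R * R, z \in @torus R ->
        converges_along primes_set (fun p => s a p z)})
  /\
  (forall P : set nat, P `<=` primes_set -> infinite_set P ->
     (\sum_(p <oo | p \in P) ((ln (p%:R : R) / p%:R)%:E) < +oo)%E ->
     {ae @mu2 R, forall z : R * R, z \in @torus R ->
        cvg_along P (fun p => s a p z) 0}).
Proof.
split; first exact: not_ae_converges_along_primes.
move=> P P_prime _ summable.
have P_ge2 p : P p -> (2 <= p)%N by move=> /P_prime; exact: prime_gt1.
exact: ae_cvg_along_s0 ha P_prime (summable_inv_of_summable_ln_div _ P_ge2 summable).
Qed.
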